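(* Let $G$ be a connected graph, $X$ a minimum vertex cover of $G$, and $\ell,d$ integers. Suppose some vertex $x^\circ\in X$ is adjacent to a pendant vertex (a vertex of degree $1$). Suppose there are subsets $X_s\subseteq X$ and $Y_s\subseteq V(G)\setminus X$ such that (i) $(X\setminus X_s)\cup Y_s$ is a vertex cover of $G$, (ii) $\mathrm{rank}((X\setminus X_s)\cup Y_s)\ge \ell$, and (iii) $|Y_s|-|X_s|\le \ell-d$. Then there are subsets $X'_s\subseteq X$ and $Y'_s\subseteq V(G)\setminus X$ satisfying (i), (ii), (iii) (with $X_s,Y_s$ replaced by $X'_s,Y'_s$) and additionally $x^\circ\notin X'_s$.
   Context: All graphs are finite, simple and undirected. $\mathrm{rank}(H)$ is $|V(H)|$ minus the number of connected components of $H$, and for $S\subseteq V(G)$, $\mathrm{rank}(S):=\mathrm{rank}(G[S])$. *)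

From mathcomp Require Import all_boot all_order all_algebra.
Set Implicit Arguments. Unset Strict Implicit. Unset Printing Implicit Defensive.

Definition simple_graph (T : finType) (e : rel T) : Prop :=
  symmetric e /\ irreflexive e.

Definition connected_graph (T : finType) (e : rel T) : Prop :=
  forall x y : T, connect e x y.

Definition vertex_cover (T : finType) (e : rel T) (S : {set T}) : Prop :=
  forall x y : T, e x y -> (x \in S) || (y \in S).

Definition min_vertex_cover (T : finType) (e : rel T) (X : {set T}) : Prop :=
  vertex_cover e X /\ forall S : {set T}, vertex_cover e S -> #|X| <= #|S|.

Definition degree (T : finType) (e : rel T) (x : T) : nat := #|[set y | e x y]|.

Definition induced (T : finType) (e : rel T) (S : {set T}) : rel T :=
  fun x y => [&& x \in S, y \in S & e x y].

Definition n_components (T : finType) (e : rel T) (S : {set T}) : nat :=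
  n_comp (induced e S) (mem S).

Definition rank_set (T : finType) (e : rel T) (S : {set T}) : int :=
  (#|S|%:Z - (n_components e S)%:Z)%R.

From mathcomp Require Import all_boot all_order all_algebra.
From mathcomp Require Import zify.
Import Order.TTheory.
Set Implicit Arguments. Unset Strict Implicit. Unset Printing Implicit Defensive.

(* Let p be the pendant neighbour of x0.  Minimality of X forces p outside X,
   so if x0 is removed (x0 in Xs) the cover (X \ Xs) u Ys must contain p
   through Ys.  Trading p for x0 (drop x0 from Xs and p from Ys) keeps the
   cover, since p's only edge goes to x0, keeps both cardinalities balanced,
   and cannot increase the number of components: p was isolated in the old
   induced subgraph, and x0 takes its place, possibly merging components.
   Hence the rank does not drop. *)

Lemma leq_n_comp_hom (T T' : finType) (ea : rel T) (eb : rel T')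
    (A : {set T}) (B : {set T'}) (f : T -> T') (g : T' -> T) :
  connect_sym ea -> connect_sym eb -> closed ea A ->
  (forall x y, ea x y -> connect eb (f x) (f y)) ->
  {in B, forall r, g r \in A /\ f (g r) = r} ->
  n_comp eb B <= n_comp ea A.
Proof.
move=> ea_sym eb_sym clA f_hom g_sec.
have f_connect x y : connect ea x y -> connect eb (f x) (f y).
  move=> /connectP[q + ->]; elim: q x => //= z q IHq x /andP[/f_hom xz /IHq].
  exact: connect_trans.
pose root_g r := fingraph.root ea (g r).
rewrite /n_comp_mem -(@card_in_image _ _ root_g (predI (roots eb) (mem B))).
  apply: subset_leq_card; apply/subsetP => _ /imageP[r /andP[_ rB] ->].
  have [gA _] := g_sec r rB.
  rewrite !inE roots_root //=.
  by rewrite (closed_connect clA (connect_root ea (g r))) in gA.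
move=> r1 r2 /andP[/eqP root1 B1] /andP[/eqP root2 B2] /= /(fingraph.rootP ea_sym).
have [_ fg1] := g_sec r1 B1; have [_ fg2] := g_sec r2 B2.
by move=> /f_connect; rewrite fg1 fg2 => /(fingraph.rootP eb_sym); rewrite root1 root2.
Qed.

Lemma degree1_neighbor (T : finType) (e : rel T) (p x y : T) :
  degree e p = 1 -> e p x -> e p y -> y = x.
Proof.
move=> /eqP/cards1P[z nbr_p] px py.
have : x \in [set y | e p y] by rewrite inE.
have : y \in [set y | e p y] by rewrite inE.
by rewrite nbr_p !inE => /eqP -> /eqP ->.
Qed.

Section PendantSwap.

Variables (T : finType) (e : rel T).
Hypothesis e_sym : symmetric e.

Lemma induced_connect_sym (S : {set T}) : connect_sym (induced e S).
Proof.
apply: sym_connect_sym => x y; rewrite /induced e_sym.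
by case: (x \in S); case: (y \in S).
Qed.

Variables (p x0 : T).
Hypothesis p_pendant : forall y, e p y -> y = x0.

Lemma min_vertex_cover_pendant (X : {set T}) :
  min_vertex_cover e X -> x0 \in X -> p != x0 -> p \notin X.
Proof.
move=> [coverX minX] x0X px0; apply/negP => pX.
suff /minX : vertex_cover e (X :\ p) by rewrite (cardsD1 p X) pX ltnn.
move=> x y; rewrite !inE.
have [-> /p_pendant-> | xp] /= := eqVneq x p; first by rewrite eq_sym px0 x0X.
have [-> | yp] /= := eqVneq y p; last exact: coverX.
by rewrite e_sym => /p_pendant->; rewrite x0X.
Qed.

Lemma vertex_cover_pendant_swap (S : {set T}) :
  vertex_cover e S -> vertex_cover e (x0 |: S :\ p).
Proof.
move=> coverS x y; rewrite !inE.
have [-> /p_pendant-> | xp] /= := eqVneq x p; first by rewrite eqxx orbT.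
have [-> | yp] /= := eqVneq y p; first by rewrite e_sym => /p_pendant->; rewrite eqxx.
by move/coverS; case: (x \in S); case: (y \in S); rewrite ?orbT.
Qed.

Variable S : {set T}.
Hypotheses (pS : p \in S) (x0S : x0 \notin S).

Lemma card_pendant_swap : #|x0 |: S :\ p| = #|S|.
Proof.
by rewrite cardsU1 in_setD1 (negbTE x0S) andbF (cardsD1 p S) pS.
Qed.

Lemma n_components_pendant_swap :
  n_components e (x0 |: S :\ p) <= n_components e S.
Proof.
pose to_x0 z := if z == p then x0 else z.
pose to_p z := if z == x0 then p else z.
apply: (@leq_n_comp_hom _ _ _ _ _ _ to_x0 to_p).
- exact: induced_connect_sym.
- exact: induced_connect_sym.
- by move=> x y /and3P[-> -> _].
- move=> x y /and3P[xS yS xy].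
  have notp z : z \in S -> e p z = false.
    by apply: contraTF => /p_pendant ->; rewrite (negbTE x0S).
  have xp : x != p by apply/eqP => xp; rewrite xp (notp _ yS) in xy.
  have yp : y != p by apply/eqP => yp; rewrite yp e_sym (notp _ xS) in xy.
  rewrite /to_x0 (negbTE xp) (negbTE yp); apply: connect1.
  by rewrite /induced !inE xp yp xS yS xy !orbT.
- move=> r; rewrite !inE /to_p /to_x0.
  have [-> _ | _ /andP[rp rS]] := eqVneq r x0; first by rewrite pS eqxx.
  by rewrite (negbTE rp).
Qed.

Lemma rank_set_pendant_swap : (rank_set e S <= rank_set e (x0 |: S :\ p))%R.
Proof.
rewrite /rank_set card_pendant_swap.
have := n_components_pendant_swap; lia.
Qed.

End PendantSwap.

Local Open Scope ring_scope.

Theorem lemma2 (T : finType) (e : rel T) (X : {set T}) (l d : int) (x0 : T) :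
  simple_graph e -> connected_graph e -> min_vertex_cover e X ->
  x0 \in X -> (exists p : T, e x0 p /\ degree e p = 1%N) ->
  (exists (Xs Ys : {set T}),
      [/\ Xs \subset X, Ys \subset ~: X,
          vertex_cover e ((X :\: Xs) :|: Ys),
          l <= rank_set e ((X :\: Xs) :|: Ys)
        & #|Ys|%:Z - #|Xs|%:Z <= l - d]) ->
  exists (Xs' Ys' : {set T}),
      [/\ Xs' \subset X, Ys' \subset ~: X,
          vertex_cover e ((X :\: Xs') :|: Ys'),
          l <= rank_set e ((X :\: Xs') :|: Ys')
        & #|Ys'|%:Z - #|Xs'|%:Z <= l - d] /\ x0 \notin Xs'.
Proof.
move=> [e_sym e_irr] _ minX x0X [p [x0p deg_p]] [Xs [Ys [XsX YsX coverS rankS cardS]]].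
have [x0Xs | ] := boolP (x0 \in Xs); last by exists Xs, Ys.
have p_pendant y : e p y -> y = x0 by apply: degree1_neighbor; rewrite // e_sym.
have px0 : p != x0 by apply: contraTneq x0p => ->; rewrite e_irr.
have pX := min_vertex_cover_pendant e_sym p_pendant minX x0X px0.
set S := (X :\: Xs) :|: Ys in coverS rankS.
have x0S : x0 \notin S.
  by rewrite !inE x0Xs /=; apply: contraL x0X => /(subsetP YsX); rewrite inE.
have pS : p \in S by have := coverS _ _ x0p; rewrite (negbTE x0S).
have pYs : p \in Ys by move: pS; rewrite !inE (negbTE pX) andbF.
have swapE : (X :\: (Xs :\ x0)) :|: (Ys :\ p) = x0 |: S :\ p.
  apply/setP => z; rewrite !inE.
  have [-> | zx0] := eqVneq z x0; first by rewrite x0X.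
  by have [-> | zp] := eqVneq z p; rewrite /= ?(negbTE pX) ?andbF.
exists (Xs :\ x0), (Ys :\ p); split; last by rewrite !inE eqxx.
split; rewrite ?swapE.
- by apply: subset_trans XsX; apply: subsetDl.
- by apply: subset_trans YsX; apply: subsetDl.
- exact: vertex_cover_pendant_swap.
- exact: le_trans rankS (rank_set_pendant_swap e_sym p_pendant pS x0S).
- by move: cardS; rewrite (cardsD1 p Ys) (cardsD1 x0 Xs) pYs x0Xs; lia.
Qed.
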